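(* Let $2\le r_1<r_2$ be integers, let $T\in\mathfrak{F}(n)$ and let $\lambda=\rho(T)$. Put $\theta=\frac{-\lambda-\sqrt{\lambda^2-4}}{2}$ and $a_2=-\lambda+\frac{1}{\lambda}$. For a real $r\ge 2$ define the sequence $z_1(r)=-\lambda-\frac{r}{a_2}$, $z_{j+1}(r)=-\lambda-\frac{1}{z_j(r)}$ for $j\ge1$. Then: (a) $z_j(r)=\theta+\frac{\theta^{-1}-\theta}{\beta(\theta^2)^j+1}$, where $\beta=\beta(r)=\frac{r-a_2\theta}{a_2\theta-r\theta^2}$; (b) $\beta(r)$ is a continuous function of $r$ on $(2,\infty)\setminus\{r_*\}$, where $r_*=\frac{a_2}{\theta}$; moreover $\beta(r)$ has a single root, at $r^*=a_2\theta$, and $\beta(r)>0$ for $r\in(r_*,r^* )$; (c) for $r\in\{r_1,r_2\}$, the sequence $(z_j(r))_{j\ge1}$ satisfies $z_j(r)<0$ for all $j\ge1$, is decreasing, and $\lim_{j\to\infty}z_j(r)=\theta$.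
   Context: $\rho(G)$ denotes the spectral radius (largest eigenvalue of the adjacency matrix) of a graph $G$. For integers $h,q_1,q_2\ge 2$ and fixed integers $2\le r_1<r_2$, the tree $[h,q_1,q_2]$ is constructed as follows: take a vertex $u$; attach to $u$ a pendant path with $h$ edges; attach to $u$ a path with $q_1$ edges ending at a vertex $v_1$, and attach to $v_1$ exactly $r_1$ pendant paths with $2$ edges each; attach to $u$ a path with $q_2$ edges ending at a vertex $v_2$, and attach to $v_2$ exactly $r_2$ pendant paths with $2$ edges each. It has $n=1+h+q_1+q_2+2(r_1+r_2)$ vertices. $\mathfrak{F}(n)$ is the set of all such trees $[h,q_1,q_2]$ with $h,q_1,q_2\ge2$ and $h+q_1+q_2=n-1-2(r_1+r_2)$. *)

From HB Require Import structures.
From mathcomp Require Import all_boot all_order all_algebra.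
From mathcomp Require Import all_classical all_reals all_analysis.
Set Implicit Arguments. Unset Strict Implicit. Unset Printing Implicit Defensive.
Import Order.TTheory GRing.Theory Num.Theory.

(* The tree [h,q1,q2] (with r1 r2 pendant P3's at v1, v2), vertices 0..n-1:
   u = 0;
   pendant path u-1-2-...-h;
   path u-(h+1)-...-(h+q1) = v1;
   r1 pendant paths of 2 edges at v1: v1-(c0+2k)-(c0+2k+1), k < r1, c0 = h+q1+1;
   path u-d0-(d0+1)-...-(d0+q2-1) = v2, d0 = c0 + 2 r1;
   r2 pendant paths of 2 edges at v2: v2-(e0+2k)-(e0+2k+1), k < r2, e0 = d0+q2. *)
Definition tree_order (h q1 q2 r1 r2 : nat) : nat := 1 + h + q1 + q2 + 2 * (r1 + r2).

Definition tparent (h q1 q2 r1 r2 i : nat) : nat :=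
  let c0 := h + q1 + 1 in
  let d0 := c0 + 2 * r1 in
  let e0 := d0 + q2 in
  if (i <= h)%N then i.-1
  else if i == h + 1 then 0%N
  else if (i < c0)%N then i.-1
  else if (i < d0)%N then (if odd (i - c0) then i.-1 else h + q1)%N
  else if i == d0 then 0%N
  else if (i < e0)%N then i.-1
  else (if odd (i - e0) then i.-1 else e0.-1).

Definition tree_edge (h q1 q2 r1 r2 i j : nat) : bool :=
  ((i != 0%N) && (tparent h q1 q2 r1 r2 i == j)) ||
  ((j != 0%N) && (tparent h q1 q2 r1 r2 j == i)).

Definition tree_adj (R : fieldType) (h q1 q2 r1 r2 : nat)
  : 'M[R]_(tree_order h q1 q2 r1 r2) :=
  \matrix_(i, j) ((tree_edge h q1 q2 r1 r2 i j : nat)%:R)%R.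

Local Open Scope ring_scope.

Definition is_spectral_radius (R : realFieldType) (n : nat) (A : 'M[R]_n) (l : R) : Prop :=
  eigenvalue A l /\ (forall m, eigenvalue A m -> m <= l).

Section Seq.
Variable R : rcfType.
Definition theta (l : R) : R := (- l - Num.sqrt (l ^+ 2 - 4)) / 2.
Definition a2 (l : R) : R := - l + l^-1.
Definition beta (l r : R) : R :=
  (r - a2 l * theta l) / (a2 l * theta l - r * theta l ^+ 2).
Definition rlow (l : R) : R := a2 l / theta l.
Definition rup (l : R) : R := a2 l * theta l.
(* zseq l r j = z_j(r) for j >= 1 (index 0 unused) *)
Fixpoint zseq (l r : R) (j : nat) : R :=
  match j with
  | 0 => 0
  | 1 => - l - r / a2 l
  | k.+1 => - l - (zseq l r k)^-1
  end.
End Seq.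

From HB Require Import structures.
From mathcomp Require Import all_boot all_order all_algebra.
From mathcomp Require Import all_classical all_reals all_analysis.
From mathcomp Require Import ring lra zify.
Set Implicit Arguments. Unset Strict Implicit. Unset Printing Implicit Defensive.
Import Order.TTheory GRing.Theory Num.Theory numFieldNormedType.Exports.
Local Open Scope classical_set_scope.
Local Open Scope ring_scope.

(* Part (a): θ is the fixed point of the Möbius map z |-> -λ - 1/z with
   θ + 1/θ = -λ, and in the coordinate (θ^-1 - θ)/(z - θ) - 1 the map becomes
   multiplication by θ^2.  Part (b) is elementary.  For (c) it suffices that
   r_* < r_1 < r_2 < r^*, i.e. β(r) > 0, after which z_j decreases
   geometrically to θ.  Since λ > 2 we have r_* < 2, and both λ > 2 and
   r_2 < r^* come from one family of test vectors: for G >= 1 and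
   μ = G + 1/G put 1 at u, t = μ/(μ^2-1) and t/μ on the first two vertices of
   the pendant path and of the path to v_1, G^k at distance k along the path
   to v_2, and G^q2 (t, 1/(μ^2-1)) on each pendant path at v_2.  Its Rayleigh
   quotient exceeds μ as soon as r_2 t >= G, forcing λ > μ.  G = 1 gives
   λ > 2, and G = -θ (for which μ = λ) shows r_2 t < -θ, i.e. r_2 < r^*.
   The Rayleigh bound itself comes from maximising the quadratic form on the
   unit sphere: a maximiser is an eigenvector. *)

Section QuadraticForm.
Variables (R : realFieldType) (n : nat).
Implicit Types (A : 'M[R]_n) (u v : 'rV[R]_n).

Definition vdot u v : R := \sum_i u ord0 i * v ord0 i.
Definition qform A u v : R := \sum_i \sum_j u ord0 i * A i j * v ord0 j.

Lemma vdot_ge0 v : 0 <= vdot v v.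
Proof. by apply: sumr_ge0 => i _; rewrite -expr2 sqr_ge0. Qed.

Lemma vdot_eq0 v : vdot v v = 0 -> v = 0.
Proof.
move=> /eqP; rewrite psumr_eq0 => [/allP v0|i _]; last by rewrite -expr2 sqr_ge0.
apply/rowP => j; have /implyP := v0 j (mem_index_enum j).
by rewrite mulf_eq0 orbb mxE => /(_ isT) /eqP.
Qed.

Lemma vdotZ k v : vdot (k *: v) (k *: v) = k ^+ 2 * vdot v v.
Proof. by rewrite /vdot mulr_sumr; apply: eq_bigr => i _; rewrite !mxE; ring. Qed.

Lemma qformZ A k v : qform A (k *: v) (k *: v) = k ^+ 2 * qform A v v.
Proof.
rewrite /qform mulr_sumr; apply: eq_bigr => i _; rewrite mulr_sumr.
by apply: eq_bigr => j _; rewrite !mxE; ring.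
Qed.

Lemma vdot0 : vdot 0 0 = 0.
Proof. by rewrite -(scale0r 0) vdotZ expr0n mul0r. Qed.

Lemma qform0 A : qform A 0 0 = 0.
Proof. by rewrite -(scale0r 0) qformZ expr0n mul0r. Qed.

Lemma qform_mulmx A u v : qform A u v = vdot (u *m A) v.
Proof.
rewrite /qform /vdot exchange_big; apply: eq_bigr => j _.
by rewrite mxE mulr_suml.
Qed.

Lemma vdotDZ u v e :
  vdot (u + e *: v) (u + e *: v) = vdot u u + e * (2 * vdot u v) + e ^+ 2 * vdot v v.
Proof.
rewrite /vdot !mulr_sumr -!big_split /=; apply: eq_bigr => i _.
by rewrite !mxE; ring.
Qed.

Lemma qformDZ A u v e : A^T = A ->
  qform A (u + e *: v) (u + e *: v) =
  qform A u u + e * (2 * qform A u v) + e ^+ 2 * qform A v v.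
Proof.
move=> AT; have qformC : qform A v u = qform A u v.
  rewrite /qform exchange_big; apply: eq_bigr => i _; apply: eq_bigr => j _.
  by rewrite -[in LHS]AT mxE; ring.
have -> : 2 * qform A u v = qform A u v + qform A v u by rewrite qformC; ring.
rewrite /qform mulrDr !mulr_sumr -!big_split /=; apply: eq_bigr => i _.
rewrite !mulr_sumr -!big_split /=; apply: eq_bigr => j _.
by rewrite !mxE; ring.
Qed.

End QuadraticForm.

Lemma quad_ge0_lin_eq0 (R : realFieldType) (a b : R) :
  (forall e, 0 <= e * a + e ^+ 2 * b) -> a = 0.
Proof.
move=> ge0; apply/eqP/negPn/negP => a0.
pose c := `|b| + 1.
have c0 : 0 < c by rewrite ltr_pwDr ?normr_ge0.
have bc : b - c < 0 by have := ler_norm b; rewrite /c; lra.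
have := ge0 (- a / c).
have -> : - a / c * a + (- a / c) ^+ 2 * b = a ^+ 2 * (b - c) / c ^+ 2.
  by field; rewrite gt_eqF.
rewrite leNgt => /negP; apply.
rewrite pmulr_llt0 ?invr_gt0 ?exprn_gt0 // pmulr_rlt0 //.
by rewrite lt_neqAle sqr_ge0 andbT eq_sym sqrf_eq0.
Qed.

(* Perturb c along y = M c - c A: the form M |v|^2 - v A v^T is nonnegative and
   vanishes at c, so its first-order term in the direction y, namely |y|^2,
   vanishes too. *)
Lemma rayleigh_max_eigenvector (R : realFieldType) n (A : 'M[R]_n) (c : 'rV_n) M :
  A^T = A -> (forall v, qform A v v <= M * vdot v v) -> qform A c c = M * vdot c c ->
  c *m A = M *: c.
Proof.
move=> AT leM eqM; set y := M *: c - c *m A.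
have gap_ge0 e : 0 <= e * (2 * (M * vdot c y - qform A c y)) +
                      e ^+ 2 * (M * vdot y y - qform A y y).
  have := leM (c + e *: y); rewrite qformDZ // vdotDZ eqM -subr_ge0.
  by congr (0 <= _); ring.
have first_order : M * vdot c y - qform A c y = vdot y y.
  rewrite qform_mulmx /vdot mulr_sumr -sumrB; apply: eq_bigr => j _.
  by rewrite !mxE; ring.
have /eqP : 2 * vdot y y = 0 by rewrite -first_order; exact: quad_ge0_lin_eq0 gap_ge0.
rewrite mulf_eq0 pnatr_eq0 /= => /eqP /vdot_eq0 /eqP.
by rewrite subr_eq0 => /eqP.
Qed.

Section UnitSphere.
Variables (R : realType) (n : nat).

Lemma vdot_continuous : continuous (fun v : 'rV[R]_n => vdot v v).
Proof.
apply: (continuous_big (@add_continuous R^o)) => i _ v.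
by apply: continuousM; exact: coord_continuous.
Qed.

Lemma qform_continuous (A : 'M[R]_n) : continuous (fun v : 'rV[R]_n => qform A v v).
Proof.
apply: (continuous_big (@add_continuous R^o)) => i _.
apply: (continuous_big (@add_continuous R^o)) => j _ v.
apply: (@continuousM R _ (fun x : 'rV[R]_n => x ord0 i * A i j) (fun x => x ord0 j));
  last exact: coord_continuous.
apply: (@continuousM R _ (fun x : 'rV[R]_n => x ord0 i) (fun=> A i j));
  [exact: coord_continuous | exact: cst_continuous].
Qed.

Lemma unit_sphere_compact : compact [set v : 'rV[R]_n | vdot v v = 1].
Proof.
apply: (@subclosed_compact _ _ [set v : 'rV[R]_n | forall i, `[-1, 1]%classic (v ord0 i)]).
- apply: (@preimage_closed _ _ (fun v : 'rV[R]_n => vdot v v) [set x | x = 1]).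
    by move=> v _; exact: vdot_continuous.
  exact: closed_eq.
- by apply: (@rV_compact _ _ (fun=> `[(-1 : R), 1]%classic)) => i; exact: segment_compact.
- move=> v /= v1 i; rewrite in_itv /=.
  have : v ord0 i * v ord0 i <= 1.
    rewrite -v1 /vdot (bigD1 i) //= lerDl; apply: sumr_ge0 => j _.
    by rewrite -expr2 sqr_ge0.
  by move=> vi1; apply/andP; split; nra.
Qed.

End UnitSphere.

Lemma qform_max_unit_sphere (R : realType) n (A : 'M[R]_n.+1) :
  exists2 c, vdot c c = 1 & forall v, qform A v v <= qform A c c * vdot v v.
Proof.
pose S := [set v : 'rV[R]_n.+1 | vdot v v = 1].
have S0 : S !=set0.
  exists (\row_j ((j == ord0)%:R : R)); rewrite /S /= /vdot (bigD1 ord0) //= big1.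
    by rewrite !mxE eqxx mulr1 addr0.
  by move=> i /negbTE i0; rewrite !mxE i0 mul0r.
have [c /[!inE] c1 cmax] := EVT_max_rV S0 (@unit_sphere_compact R n.+1)
  (continuous_subspaceT (qform_continuous (A:=A))).
exists c => // v; have [v0|v0] := eqVneq (vdot v v) 0.
  by rewrite v0 mulr0 (vdot_eq0 v0) qform0.
have vpos : 0 < vdot v v by rewrite lt_def v0 vdot_ge0.
set s := Num.sqrt (vdot v v).
have s0 : 0 < s by rewrite sqrtr_gt0.
have s2 : s ^+ 2 = vdot v v by rewrite sqr_sqrtr // ltW.
have /cmax : s^-1 *: v \in S.
  by rewrite inE /S /= vdotZ -s2 exprVn mulVf // expf_neq0 // gt_eqF.
by rewrite qformZ exprVn -s2 mulrC ler_pdivrMr // exprn_gt0.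
Qed.

Lemma qform_le_eigenvalue_bound (R : realType) n (A : 'M[R]_n) l :
  A^T = A -> (forall m, eigenvalue A m -> m <= l) ->
  forall v, qform A v v <= l * vdot v v.
Proof.
case: n A => [A _ _ v|n A AT le_l v]; first by rewrite /qform /vdot !big_ord0 mulr0.
have [c c1 cmax] := qform_max_unit_sphere A.
have c0 : c != 0 by apply/eqP => c0; move: c1; rewrite c0 vdot0 => /eqP; rewrite eq_sym oner_eq0.
have eig_c : eigenvalue A (qform A c c).
  apply/eigenvalueP; exists c => //.
  by apply: rayleigh_max_eigenvector; rewrite ?c1 ?mulr1.
apply: le_trans (cmax v) _; apply: ler_wpM2r; [exact: vdot_ge0 | exact: le_l].
Qed.

Definition parent_edge (par : nat -> nat) (i j : nat) : bool :=
  ((i != 0%N) && (par i == j)) || ((j != 0%N) && (par j == i)).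

Lemma sum_delta_nat (R : nzSemiRingType) n k (F : nat -> R) : (k < n)%N ->
  \sum_(j < n) ((k == j :> nat) : nat)%:R * F j = F k.
Proof.
move=> kn; rewrite (bigD1 (Ordinal kn)) //= eqxx mul1r big1 ?addr0 // => j.
by rewrite -val_eqE eq_sym => /negbTE /= ->; rewrite mul0r.
Qed.

Lemma qform_parent_edge (R : comNzRingType) n (par : nat -> nat) (x : nat -> R) :
  (forall i, (0 < i)%N -> (par i < i)%N) ->
  \sum_(i < n) \sum_(j < n) x i * (parent_edge par i j : nat)%:R * x j
  = \sum_(i < n) (if i == 0%N :> nat then 0 else 2 * (x i * x (par i))).
Proof.
move=> par_lt.
pose up i j := ((i != 0%N) && (par i == j) : nat)%:R : R.
have edge_split i j : (parent_edge par i j : nat)%:R = up i j + up j i.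
  rewrite /up /parent_edge.
  have [/andP[i0 /eqP pij]|_] /= := boolP ((i != 0%N) && (par i == j)).
    have [/andP[j0 /eqP pji]|_] /= := boolP ((j != 0%N) && (par j == i)).
      by have := par_lt i; have := par_lt j; lia.
    by rewrite addr0.
  by rewrite add0r.
have sum_up (i : 'I_n) : \sum_(j < n) x i * up i j * x j
    = if i == 0%N :> nat then 0 else x i * x (par i).
  rewrite /up; have [i0|i0] /= := eqVneq (i : nat) 0%N.
    by rewrite big1 // => j _; rewrite i0 mulr0 mul0r.
  have pn : (par i < n)%N by apply: ltn_trans (par_lt _ _) (ltn_ord i); rewrite lt0n.
  rewrite -(sum_delta_nat (fun j => x i * x j) pn); apply: eq_bigr => j _.
  by ring.
transitivity (\sum_(i < n) \sum_(j < n) x i * up i j * x j +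
              \sum_(i < n) \sum_(j < n) x j * up j i * x i).
  rewrite -big_split; apply: eq_bigr => i _; rewrite -big_split.
  by apply: eq_bigr => j _ /=; rewrite edge_split; ring.
rewrite [X in _ + X]exchange_big -big_split; apply: eq_bigr => i _ /=.
by rewrite sum_up; case: ifP => _; [rewrite addr0 | ring].
Qed.

Lemma tparent_lt h q1 q2 r1 r2 i : (0 < i)%N -> (tparent h q1 q2 r1 r2 i < i)%N.
Proof. by rewrite /tparent; repeat case: ifP; lia. Qed.

Ltac simpl_ifs := repeat first [rewrite ifT; [|lia] | rewrite ifF; [|apply/negbTE; lia]].

Lemma big_nat_shift (R : nmodType) (f : nat -> R) m q :
  \sum_(m <= i < m + q) f i = \sum_(k < q) f (m + k)%N.
Proof.
by rewrite -{1}(add0n m) big_addn addKn big_mkord; apply: eq_bigr => k _; rewrite addnC.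
Qed.

Lemma big_nat_pairs (R : nmodType) (f : nat -> R) m r :
  \sum_(m <= i < m + 2 * r) f i = \sum_(k < r) (f (m + 2 * k)%N + f (m + 2 * k + 1)%N).
Proof.
elim: r => [|r IH]; first by rewrite muln0 addn0 big_geq // big_ord0.
rewrite big_ord_recr /= -IH (_ : (m + 2 * r.+1 = (m + 2 * r).+2)%N); last lia.
by rewrite !big_nat_recr /= ?addn1 ?addrA //; lia.
Qed.

Section TestVector.
Variables (R : fieldType) (h q1 q2 r1 r2 : nat) (mu G t a : R).
Hypotheses (h_ge2 : (2 <= h)%N) (q1_ge2 : (2 <= q1)%N) (q2_gt0 : (0 < q2)%N).

Local Notation d0 := (h + q1 + 1 + 2 * r1)%N.
Local Notation e0 := (h + q1 + 1 + 2 * r1 + q2)%N.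
Local Notation par := (tparent h q1 q2 r1 r2).

Definition test_vec (i : nat) : R :=
  if i == 0%N then 1 else if i == 1%N then t else if i == 2%N then t / mu
  else if i == (h + 1)%N then t else if i == (h + 2)%N then t / mu
  else if (d0 <= i < e0)%N then G ^+ (i - d0).+1
  else if (e0 <= i)%N then G ^+ q2 * (if odd (i - e0) then a else t)
  else 0.

Local Notation x := test_vec.

Lemma test_vec_h1 : x (h + 1) = t. Proof. by rewrite /test_vec; simpl_ifs. Qed.
Lemma test_vec_h2 : x (h + 2) = t / mu. Proof. by rewrite /test_vec; simpl_ifs. Qed.
Lemma test_vec_v2path k : (k < q2)%N -> x (d0 + k) = G ^+ k.+1.
Proof. by move=> kq; rewrite /test_vec; simpl_ifs; rewrite addKn. Qed.
Lemma test_vec_leg0 k : x (e0 + 2 * k) = G ^+ q2 * t.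
Proof. by rewrite /test_vec; simpl_ifs. Qed.
Lemma test_vec_leg1 k : x (e0 + 2 * k + 1) = G ^+ q2 * a.
Proof. by rewrite /test_vec; simpl_ifs. Qed.
Lemma test_vec_zero i : ((3 <= i < h + 1) || (h + 3 <= i < d0))%N -> x i = 0.
Proof. by move=> Hi; rewrite /test_vec; simpl_ifs. Qed.

Lemma tparent_h1 : par (h + 1) = 0%N. Proof. by rewrite /tparent; simpl_ifs. Qed.
Lemma tparent_h2 : par (h + 2) = (h + 1)%N. Proof. by rewrite /tparent; simpl_ifs; lia. Qed.
Lemma tparent_v2path k : (0 < k < q2)%N -> par (d0 + k) = (d0 + k.-1)%N.
Proof. by move=> kq; rewrite /tparent; simpl_ifs; lia. Qed.
Lemma tparent_v2 : par d0 = 0%N. Proof. by rewrite /tparent; simpl_ifs. Qed.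
Lemma tparent_leg0 k : par (e0 + 2 * k) = (d0 + q2.-1)%N.
Proof. by rewrite /tparent; simpl_ifs; lia. Qed.
Lemma tparent_leg1 k : par (e0 + 2 * k + 1) = (e0 + 2 * k)%N.
Proof. by rewrite /tparent; simpl_ifs; lia. Qed.

Definition vertex_excess (i : nat) : R :=
  (if i == 0%N then 0 else 2 * (x i * x (par i))) - mu * x i ^+ 2.

Lemma vertex_excess_zero i : x i = 0 -> vertex_excess i = 0.
Proof. by move=> xi0; rewrite /vertex_excess xi0; case: ifP => _; ring. Qed.

Lemma sum_vertex_excess_split :
  \sum_(i < tree_order h q1 q2 r1 r2) vertex_excess i =
  vertex_excess 0 + vertex_excess 1 + vertex_excess 2 +
  vertex_excess (h + 1) + vertex_excess (h + 2) +
  \sum_(k < q2) vertex_excess (d0 + k) +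
  \sum_(k < r2) (vertex_excess (e0 + 2 * k) + vertex_excess (e0 + 2 * k + 1)).
Proof.
have -> : tree_order h q1 q2 r1 r2 = (e0 + 2 * r2)%N by rewrite /tree_order; lia.
rewrite -(big_mkord xpredT) (@big_cat_nat _ _ _ d0) /=; [|lia|lia].
rewrite (@big_cat_nat _ _ _ e0 d0) /=; [|lia|lia].
rewrite (big_nat_shift _ d0 q2) big_nat_pairs.
rewrite big_ltn; last lia.
rewrite big_ltn; last lia.
rewrite big_ltn; last lia.
rewrite (@big_cat_nat _ _ _ (h + 1) 3) /=; [|lia|lia].
rewrite (@big_ltn _ _ _ (h + 1)); last lia.
rewrite (@big_ltn _ _ _ (h + 1).+1); last lia.
have -> : ((h + 1).+1 = h + 2)%N by lia.
have -> : ((h + 2).+1 = h + 3)%N by lia.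
have zero_range m p : ((3 <= m) && (p <= h + 1) || (h + 3 <= m) && (p <= d0))%N ->
    \sum_(m <= i < p) vertex_excess i = 0.
  move=> mp; rewrite big_nat_cond big1 // => i /andP[/andP[mi ip] _].
  by apply/vertex_excess_zero/test_vec_zero; lia.
by rewrite !zero_range ?leqnn ?orbT // !add0r; ring.
Qed.

Lemma sum_vertex_excess :
  \sum_(i < tree_order h q1 q2 r1 r2) vertex_excess i =
  - mu + 2 * ((2 * t - mu * t ^+ 2) + (2 * (t / mu * t) - mu * (t / mu) ^+ 2)) +
  \sum_(k < q2) (2 * (G ^+ k.+1 * G ^+ k) - mu * (G ^+ k.+1) ^+ 2) +
  r2%:R * ((G ^+ q2) ^+ 2 * (2 * t - mu * t ^+ 2 + 2 * a * t - mu * a ^+ 2)).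
Proof.
have not0 i : (0 < i)%N -> (i == 0%N) = false by case: i.
have ex1 : vertex_excess 1 = 2 * t - mu * t ^+ 2.
  by rewrite /vertex_excess /= /tparent; simpl_ifs; rewrite /test_vec /= mulr1.
have ex2 : vertex_excess 2 = 2 * (t / mu * t) - mu * (t / mu) ^+ 2.
  by rewrite /vertex_excess /= /tparent; simpl_ifs.
have exh1 : vertex_excess (h + 1) = 2 * t - mu * t ^+ 2.
  by rewrite /vertex_excess not0 1?tparent_h1 ?test_vec_h1 ?mulr1 //; lia.
have exh2 : vertex_excess (h + 2) = 2 * (t / mu * t) - mu * (t / mu) ^+ 2.
  by rewrite /vertex_excess not0 1?tparent_h2 ?test_vec_h1 ?test_vec_h2 //; lia.
have expath (k : 'I_q2) : vertex_excess (d0 + k) =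
    2 * (G ^+ k.+1 * G ^+ k) - mu * (G ^+ k.+1) ^+ 2.
  rewrite /vertex_excess not0; last lia.
  rewrite test_vec_v2path //; have [k0|k_gt0] := posnP k.
    by rewrite k0 addn0 tparent_v2.
  rewrite tparent_v2path ?k_gt0 //= test_vec_v2path ?prednK //.
  by rewrite (leq_trans _ (ltn_ord k)) // ltn_predL.
have exleg (k : 'I_r2) : vertex_excess (e0 + 2 * k) + vertex_excess (e0 + 2 * k + 1) =
    (G ^+ q2) ^+ 2 * (2 * t - mu * t ^+ 2 + 2 * a * t - mu * a ^+ 2).
  rewrite /vertex_excess not0; last lia.
  rewrite not0; last lia.
  rewrite tparent_leg0 tparent_leg1 test_vec_leg0 test_vec_leg1.
  by rewrite test_vec_v2path ?prednK // ?ltn_predL //; ring.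
rewrite sum_vertex_excess_split (eq_bigr _ (fun k _ => expath k)).
rewrite (eq_bigr _ (fun k _ => exleg k)) sumr_const card_ord -mulr_natl.
rewrite ex1 ex2 exh1 exh2 /vertex_excess /= /test_vec /=.
by ring.
Qed.

End TestVector.

Lemma tree_adj_tr (R : fieldType) h q1 q2 r1 r2 :
  (tree_adj R h q1 q2 r1 r2)^T = tree_adj R h q1 q2 r1 r2.
Proof. by apply/matrixP => i j; rewrite !mxE /tree_edge orbC. Qed.

Lemma qform_tree_adj_test_vec (R : realFieldType) h q1 q2 r1 r2 (mu G t a : R) :
  let X := \row_(i < tree_order h q1 q2 r1 r2) test_vec h q1 q2 r1 mu G t a i in
  qform (tree_adj R h q1 q2 r1 r2) X X - mu * vdot X X =
  \sum_(i < tree_order h q1 q2 r1 r2) vertex_excess h q1 q2 r1 r2 mu G t a i.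
Proof.
rewrite /qform /vdot.
under eq_bigr do under eq_bigr do rewrite !mxE.
rewrite (qform_parent_edge _ _ (@tparent_lt h q1 q2 r1 r2)) mulr_sumr -sumrB.
by apply: eq_bigr => i _; rewrite /vertex_excess !mxE expr2.
Qed.

Lemma sum_path_excess (R : fieldType) (mu G : R) q : G != 0 -> mu = G + G^-1 ->
  \sum_(k < q) (2 * (G ^+ k.+1 * G ^+ k) - mu * (G ^+ k.+1) ^+ 2) = G - G ^+ (2 * q).+1.
Proof.
move=> G0 ->; elim: q => [|q IH]; first by rewrite big_ord0 muln0 expr1 subrr.
rewrite big_ord_recr /= IH (_ : (2 * q.+1).+1 = ((2 * q).+1).+2); last lia.
by rewrite !exprS (mulnC 2 q) exprM; field.
Qed.

Section TestWeights.
Variables (R : fieldType) (mu : R).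
Hypotheses (mu_neq0 : mu != 0) (mu2B1_neq0 : mu ^+ 2 - 1 != 0).

(* (t, a) solves the eigenvalue equations mu t = 1 + a, mu a = t on a pendant
   path of length 2 whose root has weight 1. *)
Let t := mu / (mu ^+ 2 - 1).
Let a := (mu ^+ 2 - 1)^-1.

Lemma truncated_path_excess :
  (2 * t - mu * t ^+ 2) + (2 * (t / mu * t) - mu * (t / mu) ^+ 2) = t.
Proof. by rewrite /t; field; rewrite mu_neq0 mu2B1_neq0. Qed.

Lemma pendant_path_excess : 2 * t - mu * t ^+ 2 + 2 * a * t - mu * a ^+ 2 = t.
Proof. by rewrite /t /a; field. Qed.

End TestWeights.

Lemma test_excess_pos (R : realFieldType) (mu G P r : R) :
  1 <= G -> mu = G + G^-1 -> 0 <= P -> G <= r * (mu / (mu ^+ 2 - 1)) ->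
  0 < - mu + 2 * (mu / (mu ^+ 2 - 1)) + (G - G * P) + r * (P * (mu / (mu ^+ 2 - 1))).
Proof.
set t := mu / _ => G_ge1 muE P_ge0 G_le.
set iG := G^-1 in muE *.
have G_gt0 : 0 < G by lra.
have iG_gt0 : 0 < iG by rewrite invr_gt0.
have iG_le1 : iG <= 1 by rewrite invf_le1.
have GiG : G * iG = 1 by rewrite mulfV ?gt_eqF.
have d_gt0 : 0 < mu ^+ 2 - 1 by rewrite subr_gt0 expr2; nra.
(* The excess is (2 t - 1/G) + P (r t - G), and only the first term needs work. *)
have t_gt : iG < 2 * t.
  rewrite -subr_gt0 (_ : 2 * t - iG = (2 * mu - iG * (mu ^+ 2 - 1)) / (mu ^+ 2 - 1)).
    apply: divr_gt0 => //.
    have -> : 2 * mu - iG * (mu ^+ 2 - 1) = G + iG * (1 - iG ^+ 2) + (1 - G * iG) * (G + 2 * iG).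
      by rewrite muE; ring.
    rewrite GiG subrr mul0r addr0 ltr_wpDr //.
    by apply: mulr_ge0; [exact: ltW | rewrite subr_ge0 expr2; nra].
  by rewrite /t; field; rewrite gt_eqF.
nra.
Qed.

Lemma spectral_radius_gt (R : realType) (r1 r2 h q1 q2 : nat) (l mu G : R) :
  (2 <= h)%N -> (2 <= q1)%N -> (0 < q2)%N ->
  is_spectral_radius (tree_adj R h q1 q2 r1 r2) l ->
  1 <= G -> mu = G + G^-1 -> G <= r2%:R * (mu / (mu ^+ 2 - 1)) -> mu < l.
Proof.
move=> h_ge2 q1_ge2 q2_gt0 [_ l_max] G_ge1 muE G_le.
have G_neq0 : G != 0 by rewrite gt_eqF //; lra.
have mu_gt1 : 1 < mu by rewrite muE ltr_pwDr ?invr_gt0; lra.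
have [mu_neq0 mu2B1_neq0] : mu != 0 /\ mu ^+ 2 - 1 != 0.
  by rewrite !gt_eqF ?subr_gt0 ?expr2; nra.
pose X := \row_(i < tree_order h q1 q2 r1 r2)
  test_vec h q1 q2 r1 mu G (mu / (mu ^+ 2 - 1)) (mu ^+ 2 - 1)^-1 i.
have le_l := qform_le_eigenvalue_bound (tree_adj_tr R h q1 q2 r1 r2) l_max X.
have gt_mu : 0 < qform (tree_adj R h q1 q2 r1 r2) X X - mu * vdot X X.
  rewrite qform_tree_adj_test_vec sum_vertex_excess // truncated_path_excess //.
  rewrite pendant_path_excess // sum_path_excess //.
  have -> : G ^+ (2 * q2).+1 = G * (G ^+ q2) ^+ 2 by rewrite exprS mulnC exprM.
  apply: test_excess_pos => //.
  exact: sqr_ge0.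
have X_pos : 0 < vdot X X.
  rewrite /vdot (bigD1 (Ordinal (ltn0Sn _))) //= !mxE mul1r ltr_pwDl //.
  by apply: sumr_ge0 => i _; rewrite -expr2 sqr_ge0.
nra.
Qed.

Lemma mobius_base (R : fieldType) (T A r l : R) :
  T != 0 -> A != 0 -> 1 - T ^+ 2 != 0 -> A * T - r * T ^+ 2 != 0 -> l = - (T + T^-1) ->
  let B := (r - A * T) / (A * T - r * T ^+ 2) in
  - l - r / A = T + (T^-1 - T) / (B * T ^+ 2 + 1) /\ B * T ^+ 2 + 1 != 0.
Proof.
move=> T0 A0 T2 den0 -> B.
have wE : B * T ^+ 2 + 1 = A * T * (1 - T ^+ 2) / (A * T - r * T ^+ 2) by rewrite /B; field.
have w0 : B * T ^+ 2 + 1 != 0 by rewrite wE !mulf_neq0 ?invr_eq0.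
by split => //; rewrite wE; field; rewrite T0 A0 T2 den0.
Qed.

Lemma mobius_step (R : fieldType) (T B l u : R) :
  T != 0 -> B + 1 != 0 -> l = - (T + T^-1) -> u = T + (T^-1 - T) / (B + 1) -> u != 0 ->
  - l - u^-1 = T + (T^-1 - T) / (B * T ^+ 2 + 1) /\ B * T ^+ 2 + 1 != 0.
Proof.
move=> T0 w0 -> uE u0.
have w'E : B * T ^+ 2 + 1 = T * (B + 1) * u by rewrite uE; field; rewrite T0 w0.
have w'0 : B * T ^+ 2 + 1 != 0 by rewrite w'E !mulf_neq0.
split => //; rewrite w'E.
have -> : T^-1 - T = (u - T) * (B + 1) by rewrite uE; field; rewrite T0 w0.
by field; rewrite T0 u0 w0.
Qed.

Section Theta.
Variable R : rcfType.
Implicit Type l : R.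

Lemma disc_gt0 l (l_gt2 : 2 < l) : 0 < l ^+ 2 - 4.
Proof.
have lD : 0 < (l - 2) * (l + 2) by apply: mulr_gt0; lra.
by rewrite subr_gt0 expr2; nra.
Qed.

Lemma theta_lt_N1 l (l_gt2 : 2 < l) : theta l < -1.
Proof. by rewrite /theta; have := disc_gt0 l_gt2; rewrite -sqrtr_gt0; lra. Qed.

Lemma theta_neq0 l (l_gt2 : 2 < l) : theta l != 0.
Proof. by rewrite lt_eqF //; have := theta_lt_N1 l_gt2; lra. Qed.

Lemma theta_sqr_gt1 l (l_gt2 : 2 < l) : 1 < theta l ^+ 2.
Proof. by rewrite expr2; have := theta_lt_N1 l_gt2; nra. Qed.

Lemma theta_addV l (l_gt2 : 2 < l) : l = - (theta l + (theta l)^-1).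
Proof.
have sq := sqr_sqrtr (ltW (disc_gt0 l_gt2)); have T0 := theta_neq0 l_gt2.
apply: (mulIf T0); rewrite mulNr mulrDl mulVf //.
move: T0 sq; rewrite /theta; set s := Num.sqrt _ => T0 sq.
by apply/eqP; rewrite -subr_eq0; apply/eqP; rewrite !expr2 in sq; nra.
Qed.

Lemma thetaV_sub_theta_gt0 l (l_gt2 : 2 < l) : 0 < (theta l)^-1 - theta l.
Proof.
have T_lt := theta_lt_N1 l_gt2.
have iT_gtN1 : -1 < (theta l)^-1 by rewrite -ltrN2 opprK -invrN invf_lt1; lra.
lra.
Qed.

Lemma a2_neq0 l (l_gt2 : 2 < l) : a2 l != 0.
Proof.
have il_lt1 : l^-1 < 1 by rewrite invf_lt1; lra.
by rewrite lt_eqF // /a2; lra.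
Qed.

Lemma rlow_lt2 l (l_gt2 : 2 < l) : rlow l < 2.
Proof.
rewrite /rlow ltr_ndivrMr; last by have := theta_lt_N1 l_gt2; lra.
have := disc_gt0 l_gt2; rewrite -sqrtr_gt0 /a2 /theta => s_gt0.
have : 0 < l^-1 by rewrite invr_gt0; lra.
lra.
Qed.

Lemma beta_den_neq0 l r (l_gt2 : 2 < l) : r != rlow l -> a2 l * theta l - r * theta l ^+ 2 != 0.
Proof.
move=> r_neq; have T0 := theta_neq0 l_gt2.
rewrite (_ : _ - _ = theta l * (a2 l - r * theta l)); last by ring.
rewrite mulf_neq0 //; apply: contra r_neq => /eqP H.
by apply/eqP; rewrite /rlow; apply: (mulIf T0); rewrite mulfVK //; lra.
Qed.

End Theta.

Lemma zseq_closed_form (R : rcfType) (l r : R) : 2 < l -> r != rlow l ->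
  forall j, (1 <= j)%N -> (forall i, (1 <= i < j)%N -> zseq l r i != 0) ->
  zseq l r j = theta l + ((theta l)^-1 - theta l) / (beta l r * (theta l ^+ 2) ^+ j + 1)
  /\ beta l r * (theta l ^+ 2) ^+ j + 1 != 0.
Proof.
move=> l_gt2 r_neq; have T0 := theta_neq0 l_gt2; have lE := theta_addV l_gt2.
elim=> [//|[|j] IH] _ z_neq0.
  apply: mobius_base => //; [exact: a2_neq0 | | exact: beta_den_neq0].
  by rewrite subr_eq0 lt_eqF // theta_sqr_gt1.
have z_neq0' i : (1 <= i < j.+1)%N -> zseq l r i != 0.
  by move=> ij; apply: z_neq0; lia.
have [zE w_neq0] := IH isT z_neq0'.
have := mobius_step T0 w_neq0 lE zE (z_neq0 j.+1 (leqnn _)).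
by rewrite -mulrA -exprSr.
Qed.

Lemma beta_continuous (R : realType) (l : R) : 2 < l ->
  {within [set r : R | 2 < r /\ r != rlow l], continuous (fun r : R => beta l r : R)}.
Proof.
move=> l_gt2; apply: continuous_in_subspaceT => r; rewrite inE => -[_ r_neq].
apply: (@continuousM R R^o (fun r : R => r - a2 l * theta l)
          (fun r : R => (a2 l * theta l - r * theta l ^+ 2)^-1)).
  apply: (@continuousB R R^o R^o (fun r : R => r) (fun=> a2 l * theta l)).
    exact: cvg_id.
  exact: cst_continuous.
apply: (@continuousV R R^o (fun r : R => a2 l * theta l - r * theta l ^+ 2)).
  exact: beta_den_neq0.
apply: (@continuousB R R^o R^o (fun=> a2 l * theta l) (fun r : R => r * theta l ^+ 2)).
  exact: cst_continuous.
apply: (@continuousM R R^o (fun r : R => r) (fun=> theta l ^+ 2)).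
  exact: cvg_id.
exact: cst_continuous.
Qed.

Lemma beta_eq0 (R : rcfType) (l r : R) : 2 < l -> r != rlow l ->
  beta l r = 0 <-> r = rup l.
Proof.
move=> l_gt2 r_neq; rewrite /beta /rup; split; last by move=> ->; rewrite subrr mul0r.
move/eqP; rewrite mulf_eq0 invr_eq0 (negbTE (beta_den_neq0 l_gt2 r_neq)) orbF.
by rewrite subr_eq0 => /eqP.
Qed.

Lemma beta_gt0 (R : rcfType) (l r : R) : 2 < l -> rlow l < r < rup l -> 0 < beta l r.
Proof.
move=> l_gt2 /andP[r_gt r_lt]; have T_lt := theta_lt_N1 l_gt2.
have T_lt0 : theta l < 0 by lra.
have rT_lt : r * theta l < a2 l by rewrite -ltr_ndivrMr.
rewrite /beta /rup in r_lt *.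
rewrite nmulr_rgt0 ?subr_lt0 // invr_lt0.
rewrite (_ : _ - _ = theta l * (a2 l - r * theta l)); last by ring.
by rewrite nmulr_rlt0 // subr_gt0.
Qed.

Lemma closed_form_den_gt1 (R : rcfType) (l r : R) : 2 < l -> 0 < beta l r ->
  forall j, 1 < beta l r * (theta l ^+ 2) ^+ j + 1.
Proof.
move=> l_gt2 b_gt0 j.
by rewrite ltrDr mulr_gt0 // exprn_gt0 // (lt_trans ltr01) // theta_sqr_gt1.
Qed.

Lemma zseq_lt0 (R : rcfType) (l r : R) : 2 < l -> r != rlow l -> 0 < beta l r ->
  forall j, (1 <= j)%N -> zseq l r j < 0.
Proof.
move=> l_gt2 r_neq b_gt0; have T_lt := theta_lt_N1 l_gt2.
have iT_lt0 : (theta l)^-1 < 0 by rewrite invr_lt0; lra.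
have d_gt0 := thetaV_sub_theta_gt0 l_gt2.
have w_gt1 := closed_form_den_gt1 l_gt2 b_gt0.
elim/ltn_ind => j IH j_ge1.
have z_neq0 i : (1 <= i < j)%N -> zseq l r i != 0.
  by case/andP=> i_ge1 ij; rewrite ltr0_neq0 // IH.
have [-> _] := zseq_closed_form l_gt2 r_neq j_ge1 z_neq0.
have : ((theta l)^-1 - theta l) / (beta l r * (theta l ^+ 2) ^+ j + 1) <
    (theta l)^-1 - theta l.
  by rewrite ltr_pdivrMr ?ltr_pMr ?w_gt1 // (lt_trans ltr01).
lra.
Qed.

Lemma zseq_lt0_decreasing_cvg (R : realType) (l r : R) :
  2 < l -> r != rlow l -> 0 < beta l r ->
  [/\ (forall j, (1 <= j)%N -> zseq l r j < 0),
      (forall j, (1 <= j)%N -> zseq l r j.+1 < zseq l r j) &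
      zseq l r j @[j --> \oo] --> theta l].
Proof.
move=> l_gt2 r_neq b_gt0.
have T_lt := theta_lt_N1 l_gt2; have T2_gt1 := theta_sqr_gt1 l_gt2.
have w_gt1 := closed_form_den_gt1 l_gt2 b_gt0.
have d_gt0 := thetaV_sub_theta_gt0 l_gt2.
set T := theta l in T_lt T2_gt1 w_gt1 d_gt0 *.
have w_gt0 j : 0 < beta l r * (T ^+ 2) ^+ j + 1 by apply: lt_trans (w_gt1 j).
have zE j : (1 <= j)%N -> zseq l r j = T + (T^-1 - T) / (beta l r * (T ^+ 2) ^+ j + 1).
  move=> j_ge1; apply: (zseq_closed_form l_gt2 r_neq j_ge1 _).1 => i /andP[i_ge1 _].
  by rewrite ltr0_neq0 // zseq_lt0.
split=> [|j j_ge1|]; first exact: zseq_lt0.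
  rewrite !zE // ?ltrD2l ?ltr_pM2l // ltf_pV2 ?posrE // ltrD2r.
  by rewrite [(T ^+ 2) ^+ j.+1]exprSr mulrA ltr_pMr // mulr_gt0 // exprn_gt0 //; lra.
(* |z_j - θ| <= (θ^-1 - θ) / β * (θ^-2)^j, a geometric sequence *)
apply/cvgrPdist_lt => e e_gt0.
have iT2_lt1 : `|(T ^+ 2)^-1| < 1.
  by rewrite ger0_norm ?invr_ge0 ?invf_lt1 //; lra.
have /cvgrPdist_lt /(_ e e_gt0) := cvg_geometric ((T^-1 - T) / beta l r) iT2_lt1.
apply: filterS2 (nbhs_infty_ge 1%N) => j j_ge1.
have bT_gt0 : 0 < beta l r * (T ^+ 2) ^+ j by rewrite mulr_gt0 // exprn_gt0; lra.
rewrite /= zE // opprD addrA subrr !sub0r !normrN exprVn -mulrA -invfM.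
rewrite !ger0_norm ?divr_ge0 ?ltW //; apply: le_lt_trans.
by rewrite ler_pM2l // lef_pV2 ?posrE // lerDl.
Qed.

Lemma spectral_radius_gt2 (R : realType) (r1 r2 h q1 q2 : nat) (l : R) :
  (2 <= r2)%N -> (2 <= h)%N -> (2 <= q1)%N -> (0 < q2)%N ->
  is_spectral_radius (tree_adj R h q1 q2 r1 r2) l -> 2 < l.
Proof.
move=> r2_ge2 h_ge2 q1_ge2 q2_gt0 l_rad.
apply: (spectral_radius_gt (G := 1) h_ge2 q1_ge2 q2_gt0 l_rad) => //.
  by rewrite invr1.
have : (2 : R) <= r2%:R by rewrite ler_nat.
have -> : (2 : R) ^+ 2 - 1 = 3 by rewrite expr2; lra.
lra.
Qed.

Lemma r2_lt_rup (R : realType) (r1 r2 h q1 q2 : nat) (l : R) :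
  (2 <= h)%N -> (2 <= q1)%N -> (0 < q2)%N ->
  is_spectral_radius (tree_adj R h q1 q2 r1 r2) l -> 2 < l -> r2%:R < rup l.
Proof.
move=> h_ge2 q1_ge2 q2_gt0 l_rad l_gt2.
have G_ge1 : 1 <= - theta l by have := theta_lt_N1 l_gt2; lra.
have lE : l = - theta l + (- theta l)^-1 by rewrite invrN -opprD; exact: theta_addV.
have l2B1_gt0 : 0 < l ^+ 2 - 1 by rewrite subr_gt0 expr2; nra.
have k_gt0 : 0 < l / (l ^+ 2 - 1) by rewrite divr_gt0 //; lra.
have lt_G : r2%:R * (l / (l ^+ 2 - 1)) < - theta l.
  rewrite ltNge; apply/negP => /(spectral_radius_gt h_ge2 q1_ge2 q2_gt0 l_rad G_ge1 lE).
  by rewrite ltxx.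
have -> : rup l = - theta l / (l / (l ^+ 2 - 1)).
  by rewrite /rup /a2; field; rewrite !gt_eqF //; lra.
by rewrite ltr_pdivlMr.
Qed.

Theorem theorem3p2 (R : realType) (r1 r2 h q1 q2 : nat) (l : R) :
  (2 <= r1)%N -> (r1 < r2)%N ->
  (2 <= h)%N -> (2 <= q1)%N -> (2 <= q2)%N ->
  is_spectral_radius (tree_adj R h q1 q2 r1 r2) l ->
  [/\ (* (a) *)
      (forall (r : R) (j : nat), 2 <= r -> (1 <= j)%N ->
         (forall i, (1 <= i < j)%N -> zseq l r i != 0) ->
         zseq l r j = theta l + ((theta l)^-1 - theta l)
                                / (beta l r * (theta l ^+ 2) ^+ j + 1)),
      (* (b) *)
      [/\ {within [set r : R | 2 < r /\ r != rlow l], continuous (fun r : R => beta l r : R)},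
          (forall r : R, r != rlow l -> (beta l r = 0 <-> r = rup l)) &
          (forall r : R, rlow l < r < rup l -> 0 < beta l r)] &
      (* (c) *)
      (forall r : R, r = r1%:R \/ r = r2%:R ->
         [/\ (forall j, (1 <= j)%N -> zseq l r j < 0),
             (forall j, (1 <= j)%N -> zseq l r j.+1 < zseq l r j) &
             zseq l r j @[j --> \oo] --> theta l])].
Proof.
move=> r1_ge2 r1_lt h_ge2 q1_ge2 q2_ge2 l_rad.
have q2_gt0 : (0 < q2)%N by lia.
have l_gt2 := spectral_radius_gt2 (ltnW (leq_ltn_trans r1_ge2 r1_lt)) h_ge2 q1_ge2 q2_gt0 l_rad.
have r2_lt := r2_lt_rup h_ge2 q1_ge2 q2_gt0 l_rad l_gt2.
have rlow_lt := rlow_lt2 l_gt2.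
have r_neq r : 2 <= r -> r != rlow l by move=> r_ge2; rewrite gt_eqF //; lra.
split.
- by move=> r j /r_neq r_neq' j_ge1 z_neq0; case: (zseq_closed_form l_gt2 r_neq' j_ge1 z_neq0).
- by split=> [|r|r]; [exact: beta_continuous | exact: beta_eq0 | exact: beta_gt0].
have r1_ge2R : (2 : R) <= r1%:R by rewrite ler_nat.
have r1_ltR : (r1%:R : R) < r2%:R by rewrite ltr_nat.
move=> r r_in; have r_ge2 : 2 <= r by case: r_in => ->; lra.
apply: zseq_lt0_decreasing_cvg => //; first exact: r_neq.
by apply: beta_gt0 => //; apply/andP; split; case: r_in => ->; lra.
Qed.
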